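(* Let $0<\epsilon\le0.66$ and let $a,b,c\in\mathbb R^d$ be distinct points such that $(a,b,c)$ is compatible (with respect to $\epsilon$) and $0.6231\,\frac{d(c,b)}{d(a,b)}\le1$. Then $$\angle abc>51.45^\circ+\arccos\!\left(0.6231\,\frac{d(c,b)}{d(a,b)}\right).$$ In particular, $\angle abc>102.9^\circ$.
   Context: $d(x,y)$ is Euclidean distance in $\mathbb R^d$ ($d\ge2$) and $B_x(r)$ is the closed ball of radius $r$ about $x$. For $a\ne b$, $X(a,b)$ is the set of $x\in\mathbb R^d$ with $d(x,a)=d(x,b)=\frac{d(a,b)}{\epsilon\sqrt{4-\epsilon^2}}$. A triple $(a,b,c)$ is compatible if $c\notin B_x(d(x,b))$ for all $x\in X(a,b)$ and $a\notin B_y(d(y,b))$ for all $y\in X(b,c)$. Angles are measured in degrees in $[0^\circ,180^\circ]$. *)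

From HB Require Import structures.
From mathcomp Require Import all_boot all_order all_algebra.
From mathcomp Require Import all_classical all_reals all_analysis.
Set Implicit Arguments. Unset Strict Implicit. Unset Printing Implicit Defensive.
Import Order.TTheory GRing.Theory Num.Theory.
Local Open Scope ring_scope.

Definition dist {R : realType} {d : nat} (x y : 'rV[R]_d) : R :=
  Num.sqrt (\sum_(i < d) (x ord0 i - y ord0 i) ^+ 2).

Definition dotp {R : realType} {d : nat} (x y : 'rV[R]_d) : R :=
  \sum_(i < d) x ord0 i * y ord0 i.

Definition cball {R : realType} {d : nat} (x : 'rV[R]_d) (r : R) : set 'rV[R]_d :=
  [set z | dist x z <= r].

Definition Xset {R : realType} {d : nat} (eps : R) (a b : 'rV[R]_d) : set 'rV[R]_d :=
  [set x | dist x a = dist a b / (eps * Num.sqrt (4 - eps ^+ 2)) /\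
           dist x b = dist a b / (eps * Num.sqrt (4 - eps ^+ 2))].

Definition compatible {R : realType} {d : nat} (eps : R) (a b c : 'rV[R]_d) : Prop :=
  (forall x, Xset eps a b x -> ~ cball x (dist x b) c) /\
  (forall y, Xset eps b c y -> ~ cball y (dist y b) a).

Definition angle_rad {R : realType} {d : nat} (a b c : 'rV[R]_d) : R :=
  acos (dotp (a - b) (c - b) / (dist a b * dist c b)).

Definition deg {R : realType} (t : R) : R := t * pi / 180%:R.

(* Put k := eps * sqrt (4 - eps^2) / 2.  A point x of X(a,b) lies at distance
   r = d(a,b) / (2k) from a and b, so the angle abx is theta := arccos k.  Taking
   x in the plane of a, b, c, on the side of c, compatibility says that c lies
   outside B_x(r); expanding d(x,c)^2 > r^2 gives cos(angle abc - theta) < k t with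
   t = d(c,b) / d(a,b), and the same argument for X(b,c) gives
   cos(angle abc - theta) < k / t.  Hence cos(angle abc - theta) < k = cos theta,
   i.e. angle abc > 2 theta, and, as k <= 0.6231, also
   angle abc - theta > arccos (0.6231 t).  Finally eps <= 0.66 forces
   k < 0.6230862 < cos 0.8981, so theta > 0.8981 > 51.45 degrees; the numerical
   bounds on cos and pi come from partial sums of the alternating cosine series. *)

From HB Require Import structures.
From mathcomp Require Import all_boot all_order all_algebra.
From mathcomp Require Import all_classical all_reals all_analysis.
From mathcomp Require Import ring lra.
Import Order.TTheory GRing.Theory Num.Theory numFieldNormedType.Exports.
Local Open Scope ring_scope.

Section CosTaylor.
Variable R : realType.
Implicit Types x : R.

Lemma cos_coeff'_pairE x j : cos_coeff' x j + cos_coeff' x j.+1 =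
  (-1) ^+ j * (x ^+ j.*2 / (j.*2)`!%:R - x ^+ j.*2.+2 / (j.*2.+2)`!%:R).
Proof. by rewrite /cos_coeff' -!exprnP doubleS exprS; ring. Qed.

Lemma cos_coeff'_pair_gt0 x j : 0 < x <= 2 -> (0 < j)%N ->
  0 < x ^+ j.*2 / (j.*2)`!%:R - x ^+ j.*2.+2 / (j.*2.+2)`!%:R.
Proof.
move=> /andP[x0 x2] j0.
have M12 : 12 <= ((j.*2.+2) * (j.*2.+1))%:R :> R.
  by rewrite ler_nat; case: j j0 => // j _; rewrite doubleS; apply: (@leq_mul 4 3).
have F0 : 0 < (j.*2)`!%:R :> R by rewrite ltr0n fact_gt0.
have -> : x ^+ j.*2.+2 / (j.*2.+2)`!%:R =
    x ^+ j.*2 / (j.*2)`!%:R * (x ^+ 2 / ((j.*2.+2) * (j.*2.+1))%:R).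
  rewrite !factS !natrM !exprSr; field.
  rewrite (gt_eqF F0) andbT; apply/andP; split; rewrite gt_eqF //.
set y := x ^+ j.*2 / _; rewrite -{1}[y]mulr1 -mulrBr mulr_gt0 ?divr_gt0 ?exprn_gt0 //.
rewrite subr_gt0 ltr_pdivrMr ?mul1r; first by apply: lt_le_trans M12; nra.
by apply: lt_le_trans M12.
Qed.

Lemma cos_gt_partial_sum x n : 0 < x <= 2 ->
  \sum_(0 <= i < n.*2.+2) cos_coeff' x i < cos x.
Proof.
move=> hx; have h := @cvg_cos_coeff' R x.
rewrite -(cvg_lim (@Rhausdorff R) h); apply: lt_sum_lim_series => [|j].
  by move/cvgP in h.
rewrite addnS cos_coeff'_pairE -signr_odd oddD !odd_double /= odd_double /= mul1r.
by rewrite cos_coeff'_pair_gt0 // addnS.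
Qed.

Lemma cos_lt_partial_sum x n : 0 < x <= 2 ->
  cos x < \sum_(0 <= i < n.*2.+1) cos_coeff' x i.
Proof.
move=> hx; have /cvgN h := @cvg_cos_coeff' R x.
rewrite -ltrN2 -(cvg_lim (@Rhausdorff R) h) -sumrN -seriesN.
apply: lt_sum_lim_series => [|j]; first by move/cvgP in h; rewrite seriesN.
rewrite addnS -opprD cos_coeff'_pairE -signr_odd oddD !odd_double /= odd_double /=.
by rewrite mulN1r opprK cos_coeff'_pair_gt0 // addnS.
Qed.

Lemma cos_8981_gt : 6230862%:R / 10000000%:R < cos (8981%:R / 10000%:R : R).
Proof.
have hx : 0 < (8981%:R / 10000%:R : R) <= 2 by apply/andP; split; lra.
have := cos_gt_partial_sum _ 1 hx.
rewrite !big_nat_recl // big_geq // /cos_coeff' -!exprnP !factS fact0; lra.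
Qed.

Lemma cos_1571_lt0 : cos (1571%:R / 1000%:R : R) < 0.
Proof.
have hx : 0 < (1571%:R / 1000%:R : R) <= 2 by apply/andP; split; lra.
have := cos_lt_partial_sum _ 2 hx.
rewrite !big_nat_recl // big_geq // /cos_coeff' -!exprnP !factS fact0; lra.
Qed.

Lemma pi_lt_3142 : pi < 3142%:R / 1000%:R :> R.
Proof.
have pi2 := pi_ge2 R; rewrite ltNge; apply/negP => hpi.
have : cos (pi / 2) <= cos (1571%:R / 1000%:R : R).
  by rewrite leNgt ltr_cos ?in_itv /= -?leNgt; lra.
by rewrite cos_pihalf; have := cos_1571_lt0; lra.
Qed.

End CosTaylor.

Lemma sqrtr_sqrM {R : rcfType} (x y : R) : 0 <= x ->
  Num.sqrt (x ^+ 2 * y) = x * Num.sqrt y.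
Proof. by move=> x0; rewrite sqrtrM ?sqr_ge0 // sqrtr_sqr ger0_norm. Qed.

Section Arccos.
Context {R : realType}.
Implicit Types (x y k : R).

Lemma acos_lt x y : 0 <= x <= pi -> -1 <= y <= 1 -> (acos y < x) = (cos x < y).
Proof.
move=> hx hy; rewrite -{2}(acosK (_ : y \in `[-1, 1])) ?in_itv //.
by rewrite ltr_cos ?in_itv //= acos_ge0 ?acos_lepi.
Qed.

Lemma lt_acos x y : 0 <= x <= pi -> -1 <= y <= 1 -> (x < acos y) = (y < cos x).
Proof.
move=> hx hy; rewrite -{2}(acosK (_ : y \in `[-1, 1])) ?in_itv //.
by rewrite ltr_cos ?in_itv //= acos_ge0 ?acos_lepi.
Qed.

Lemma cos_sub_acos x k : -1 <= x <= 1 -> -1 <= k <= 1 ->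
  cos (acos x - acos k) = k * x + Num.sqrt (1 - k ^+ 2) * Num.sqrt (1 - x ^+ 2).
Proof.
move=> hx hk; rewrite cosB acosK ?in_itv // acosK ?in_itv // !sin_acos //.
by rewrite mulrC [X in _ + X]mulrC.
Qed.

Lemma acos_lt_sub_acos {x k} : 0 <= x <= pi -> -1 <= k <= 1 ->
  cos (x - acos k) < k -> acos k < x - acos k.
Proof.
move=> /andP[x0 xpi] hk hlt.
have k0 := acos_ge0 hk; have kpi := acos_lepi hk.
have [xk|kx] := leP (acos k) x.
  have hD : 0 <= x - acos k <= pi by apply/andP; split; lra.
  by rewrite acos_lt.
have hD : 0 <= acos k - x <= pi by apply/andP; split; lra.
have : acos k < acos k - x by rewrite acos_lt // -opprB cosN.
lra.
Qed.

Lemma deg_5145_lt_acos {k} : -1 <= k -> k < 6230862%:R / 10000000%:R ->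
  deg (5145%:R / 100%:R) < acos k.
Proof.
move=> k1 k2; have pi2 := pi_ge2 R.
have hk : -1 <= k <= 1 by apply/andP; split; lra.
have h8981 : 8981%:R / 10000%:R < acos k.
  have h0 : 0 <= (8981%:R / 10000%:R : R) <= pi.
    by apply/andP; split; lra.
  by rewrite lt_acos //; have := cos_8981_gt R; lra.
have := pi_lt_3142 R; rewrite /deg; lra.
Qed.

Lemma angle_lower_bounds {A k t : R} : 0 <= A <= pi ->
    0 < k <= 6231%:R / 10000%:R -> deg (5145%:R / 100%:R) < acos k ->
    0 < t -> 6231%:R / 10000%:R * t <= 1 ->
    cos (A - acos k) < k * t -> cos (A - acos k) < k / t ->
  deg (5145%:R / 100%:R) + acos (6231%:R / 10000%:R * t) < A /\
  deg (1029%:R / 10%:R) < A.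
Proof.
move=> hA /andP[k0 k1] hdeg t0 ht hkt hkt'; have /andP[A0 Api] := hA.
have hk : -1 <= k <= 1 by apply/andP; split; lra.
have cos_lt_k : cos (A - acos k) < k.
  have [t1|t1] := leP t 1.
    by apply: (lt_le_trans hkt); rewrite ler_piMr // ltW.
  by apply: (lt_le_trans hkt'); rewrite ler_pdivrMr // ler_peMr // ltW.
have hAk := acos_lt_sub_acos hA hk cos_lt_k; have hk0 := acos_ge0 hk.
have hDw : acos (6231%:R / 10000%:R * t) < A - acos k.
  rewrite acos_lt; first by apply: (lt_le_trans hkt); rewrite ler_pM2r; lra.
    by apply/andP; split; lra.
  by apply/andP; split; lra.
move: hdeg; rewrite /deg; lra.
Qed.

End Arccos.

Section Dotp.
Context {R : realType} {d : nat}.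
Implicit Types (u v w x y z : 'rV[R]_d).

Lemma dotpC u v : dotp u v = dotp v u.
Proof. by apply: eq_bigr => i _; rewrite mulrC. Qed.

Lemma dotpDl u v w : dotp (u + v) w = dotp u w + dotp v w.
Proof. by rewrite /dotp -big_split; apply: eq_bigr => i _; rewrite mxE mulrDl. Qed.

Lemma dotpZl (r : R) u v : dotp (r *: u) v = r * dotp u v.
Proof. by rewrite /dotp mulr_sumr; apply: eq_bigr => i _; rewrite mxE mulrA. Qed.

Lemma dotp0l v : dotp 0 v = 0.
Proof. by rewrite -(scale0r 0) dotpZl mul0r. Qed.

Lemma dotpBl u v w : dotp (u - v) w = dotp u w - dotp v w.
Proof. by rewrite -scaleN1r dotpDl dotpZl mulN1r. Qed.

Lemma dotpDr u v w : dotp w (u + v) = dotp w u + dotp w v.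
Proof. by rewrite dotpC dotpDl !(dotpC w). Qed.

Lemma dotpZr (r : R) u v : dotp v (r *: u) = r * dotp v u.
Proof. by rewrite dotpC dotpZl dotpC. Qed.

Lemma dotpBr u v w : dotp w (u - v) = dotp w u - dotp w v.
Proof. by rewrite dotpC dotpBl !(dotpC w). Qed.

Lemma dotpp_ge0 u : 0 <= dotp u u.
Proof. by apply: sumr_ge0 => i _; rewrite -expr2 sqr_ge0. Qed.

Lemma dotpp_eq0 u : (dotp u u == 0) = (u == 0).
Proof.
apply/idP/eqP => [|->]; last by rewrite dotp0l.
rewrite psumr_eq0 => [/allP u0|i _]; last by rewrite -expr2 sqr_ge0.
apply/rowP => i; rewrite mxE; apply/eqP.
by have := u0 _ (mem_index_enum i); rewrite /= mulf_eq0 orbb.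
Qed.

Lemma dotpp_gt0 u : (0 < dotp u u) = (u != 0).
Proof. by rewrite lt_neqAle dotpp_ge0 andbT eq_sym dotpp_eq0. Qed.

Lemma dotp_delta i w : dotp (delta_mx 0 i) w = w 0 i.
Proof.
rewrite /dotp (bigD1 i) //= mxE !eqxx mul1r big1 ?addr0 // => j /negbTE ji.
by rewrite mxE ji andbF mul0r.
Qed.

Lemma cauchy_schwarz u v : dotp u v ^+ 2 <= dotp u u * dotp v v.
Proof.
have [->|u0] := eqVneq u 0.
  by rewrite !dotp0l mul0r expr0n.
have uu0 : 0 < dotp u u by rewrite dotpp_gt0.
have := dotpp_ge0 (dotp u u *: v - dotp u v *: u).
rewrite !dotpBl !dotpBr !dotpZl !dotpZr (dotpC v u).
have -> : forall a b c : R, a * (a * c) - a * (b * b) - (b * (a * b) - b * (b * a))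
    = a * (a * c - b ^+ 2) by move=> a b c; ring.
by rewrite pmulr_rge0 // subr_ge0 mulrC.
Qed.

Lemma dist_dotp x y : dist x y = Num.sqrt (dotp (x - y) (x - y)).
Proof. by congr Num.sqrt; apply: eq_bigr => i _; rewrite !mxE expr2. Qed.

Lemma sqr_dist x y : dist x y ^+ 2 = dotp (x - y) (x - y).
Proof. by rewrite dist_dotp sqr_sqrtr // dotpp_ge0. Qed.

Lemma distC x y : dist x y = dist y x.
Proof. by rewrite !dist_dotp -opprB -scaleN1r dotpZl dotpZr !mulN1r opprK. Qed.

Lemma dist_ge0 x y : 0 <= dist x y.
Proof. exact: sqrtr_ge0. Qed.

Lemma dist_gt0 x y : (0 < dist x y) = (x != y).
Proof. by rewrite dist_dotp sqrtr_gt0 dotpp_gt0 subr_eq0. Qed.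

End Dotp.

Section Orthogonal.
Context {R : realType} {d : nat}.
Hypothesis hd : (2 <= d)%N.
Implicit Types (u v z : 'rV[R]_d) (a b c : 'rV[R]_d).

Lemma exists_orth_nonzero u : exists2 z, z != 0 & dotp z u = 0.
Proof.
pose i0 := Ordinal (ltnW hd); pose i1 := Ordinal hd.
have [u0|u0] := eqVneq (u 0 i0 ^+ 2 + u 0 i1 ^+ 2) 0.
  exists (delta_mx 0 i0); last first.
    apply/eqP; rewrite dotp_delta -sqrf_eq0 eq_le sqr_ge0 andbT -u0.
    by rewrite lerDl sqr_ge0.
  by apply/eqP => /rowP /(_ i0); rewrite !mxE !eqxx; apply/eqP; exact: oner_neq0.
exists (u 0 i1 *: delta_mx 0 i0 - u 0 i0 *: delta_mx 0 i1).
  have pos : 0 < u 0 i0 ^+ 2 + u 0 i1 ^+ 2.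
    by rewrite lt_neqAle eq_sym u0 addr_ge0 ?sqr_ge0.
  rewrite -dotpp_gt0 !dotpBl !dotpZl !dotp_delta !mxE !eqxx /=.
  nra.
by rewrite dotpBl !dotpZl !dotp_delta mulrC subrr.
Qed.

Lemma dotp_normalize z : z != 0 ->
  dotp ((Num.sqrt (dotp z z))^-1 *: z) ((Num.sqrt (dotp z z))^-1 *: z) = 1.
Proof.
rewrite -dotpp_gt0 => z0; rewrite dotpZl dotpZr mulrA -expr2 exprVn sqr_sqrtr.
  by rewrite mulVf // gt_eqF.
exact: ltW.
Qed.

Lemma exists_unit_orth u v : u != 0 -> exists e, [/\ dotp e e = 1, dotp e u = 0 &
  dotp e v = Num.sqrt (dotp v v - dotp u v ^+ 2 / dotp u u)].
Proof.
move=> u0; have uu0 : dotp u u != 0 by rewrite dotpp_eq0.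
set p := v - (dotp u v / dotp u u) *: u.
have pu : dotp p u = 0 by rewrite dotpBl dotpZl (dotpC v) divfK // subrr.
have pv : dotp p v = dotp p p by rewrite [in RHS]dotpBr dotpZr pu mulr0 subr0.
have -> : dotp v v - dotp u v ^+ 2 / dotp u u = dotp p p.
  by rewrite dotpBl !dotpBr !dotpZl !dotpZr (dotpC v u); field.
have [p0|p0] := eqVneq p 0.
  have [z z0 zu] := exists_orth_nonzero u.
  exists ((Num.sqrt (dotp z z))^-1 *: z); split; first exact: dotp_normalize.
    by rewrite dotpZl zu mulr0.
  have -> : v = (dotp u v / dotp u u) *: u by apply/eqP; rewrite -subr_eq0 -/p p0.
  by rewrite p0 dotp0l sqrtr0 dotpZr dotpZl zu !mulr0.
exists ((Num.sqrt (dotp p p))^-1 *: p); split; first exact: dotp_normalize.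
  by rewrite dotpZl pu mulr0.
have pp0 : 0 < dotp p p by rewrite dotpp_gt0.
rewrite dotpZl pv -{2}(sqr_sqrtr (ltW pp0)) expr2 mulKf // gt_eqF //.
by rewrite sqrtr_gt0.
Qed.

Lemma exists_equidistant_point {a b} c {r} : a != b -> dist a b / 2 <= r ->
  exists x, [/\ dist x a = r, dist x b = r & dist x c ^+ 2 =
    r ^+ 2 + dist c b ^+ 2 - (dotp (a - b) (c - b) + 2 *
      Num.sqrt (r ^+ 2 - dist a b ^+ 2 / 4) *
      Num.sqrt (dist c b ^+ 2 - dotp (a - b) (c - b) ^+ 2 / dist a b ^+ 2))].
Proof.
move=> ab hr; have r0 : 0 <= r by apply: le_trans hr; rewrite divr_ge0 ?dist_ge0.
have h2 : Num.sqrt (r ^+ 2 - dist a b ^+ 2 / 4) ^+ 2 = r ^+ 2 - dist a b ^+ 2 / 4.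
  rewrite sqr_sqrtr // subr_ge0; have := dist_ge0 a b.
  by move: hr; rewrite ler_pdivrMr //; nra.
move: h2; rewrite !sqr_dist; set u := a - b; set v := c - b.
set h := Num.sqrt _ => h2.
have u0 : u != 0 by rewrite subr_eq0.
have [e [ee eu ev]] := exists_unit_orth u v u0.
(* x := b + w lies above the midpoint of [a, b] at height h, in the plane of
   a, b, c and on the side of c. *)
set w := 2^-1 *: u + h *: e.
have ww : dotp w w = r ^+ 2.
  rewrite !dotpDl !dotpZl !dotpDr !dotpZr ee eu (dotpC u e) eu.
  have -> : r ^+ 2 = h ^+ 2 + dotp u u / 4 by rewrite h2; ring.
  by field.
have wu : dotp w u = dotp u u / 2 by rewrite dotpDl !dotpZl eu; field.
have wv : dotp w v = dotp u v / 2 + h * Num.sqrt (dotp v v - dotp u v ^+ 2 / dotp u u).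
  by rewrite dotpDl !dotpZl ev; field.
have shift y : b + w - y = w - (y - b) by rewrite opprB [b + w]addrC addrA.
have xa : b + w - a = w - u by rewrite shift.
have xc : b + w - c = w - v by rewrite shift.
have xb : b + w - b = w by rewrite shift subrr subr0.
exists (b + w); rewrite !dist_dotp xa xb xc; clearbody u v w.
rewrite ww sqrtr_sqr ger0_norm // sqr_sqrtr ?dotpp_ge0 //.
rewrite !dotpBl !dotpBr (dotpC u w) (dotpC v w) ww wu wv; split => //; last by field.
by rewrite -[RHS](ger0_norm r0) -sqrtr_sqr; congr Num.sqrt; field.
Qed.

Lemma dotp_lt_of_equidistant_far {a b c r} : a != b -> dist a b / 2 <= r ->
    (forall x, dist x a = r -> dist x b = r -> r < dist x c) ->
  dotp (a - b) (c - b) + 2 * Num.sqrt (r ^+ 2 - dist a b ^+ 2 / 4) *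
    Num.sqrt (dist c b ^+ 2 - dotp (a - b) (c - b) ^+ 2 / dist a b ^+ 2)
  < dist c b ^+ 2.
Proof.
move=> ab hr far; have [x [xa xb xc]] := exists_equidistant_point c ab hr.
have r0 : 0 <= r by rewrite -xa dist_ge0.
have := far x xa xb; rewrite -(ltr_pXn2r (_ : 0 < 2)%N) ?nnegrE ?dist_ge0 // xc.
lra.
Qed.

End Orthogonal.

Section AngleRad.
Context {R : realType} {d : nat}.
Implicit Types a b c : 'rV[R]_d.

(* When a = b or c = b the quotient is 0, since x / 0 = 0. *)
Lemma cos_angle_itv a b c :
  -1 <= dotp (a - b) (c - b) / (dist a b * dist c b) <= 1.
Proof.
have Ls0 : 0 <= dist a b * dist c b by rewrite mulr_ge0 ?dist_ge0.
have CS : `|dotp (a - b) (c - b)| <= dist a b * dist c b.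
  rewrite -(ler_pXn2r (_ : 0 < 2)%N) ?nnegrE // real_normK ?num_real //.
  by rewrite exprMn !sqr_dist cauchy_schwarz.
rewrite -ler_norml normrM normfV (ger0_norm Ls0).
have [->|Ls] := eqVneq (dist a b * dist c b) 0; first by rewrite invr0 mulr0 ler01.
by rewrite ler_pdivrMr ?mul1r // lt_neqAle eq_sym Ls.
Qed.

Lemma angle_rad_itv a b c : 0 <= angle_rad a b c <= pi.
Proof.
have h := cos_angle_itv a b c.
by apply/andP; split; [apply: acos_ge0 | apply: acos_lepi].
Qed.

Lemma angle_radC a b c : angle_rad a b c = angle_rad c b a.
Proof. by rewrite /angle_rad dotpC [dist a b * _]mulrC. Qed.

End AngleRad.

(* For x in X(a,b), d(a,b) = 2 * chord_ratio eps * d(x,a): chord_ratio eps is the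
   cosine of the angle abx. *)
Definition chord_ratio {R : realType} (eps : R) : R :=
  eps * Num.sqrt (4 - eps ^+ 2) / 2.

Section ChordRatio.
Context {R : realType}.
Implicit Types eps : R.

Lemma two_chord_ratio eps : 2 * chord_ratio eps = eps * Num.sqrt (4 - eps ^+ 2).
Proof. by rewrite /chord_ratio mulrC divfK // pnatr_eq0. Qed.

Lemma chord_ratio_gt0 {eps} : 0 < eps < 2 -> 0 < chord_ratio eps.
Proof.
by move=> /andP[e0 e2]; rewrite /chord_ratio !mulr_gt0 // sqrtr_gt0 subr_gt0; nra.
Qed.

Lemma chord_ratio_le1 eps : chord_ratio eps <= 1.
Proof.
rewrite /chord_ratio; have [he|he] := lerP 0 (4 - eps ^+ 2); last first.
  by rewrite ler0_sqrtr ?mulr0 ?mul0r ?ler01 // ltW.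
have s2 := sqr_sqrtr he; have := sqrtr_ge0 (4 - eps ^+ 2).
set s := Num.sqrt _ in s2 *; move=> s0.
have : 0 <= (eps - s) ^+ 2 := sqr_ge0 _.
lra.
Qed.

Lemma chord_ratio_lt {eps} : 0 < eps <= 66%:R / 100%:R ->
  chord_ratio eps < 6230862%:R / 10000000%:R.
Proof.
move=> /andP[e0 e1]; rewrite /chord_ratio.
have he : 0 <= 4 - eps ^+ 2 by nra.
have s2 := sqr_sqrtr he; have := sqrtr_ge0 (4 - eps ^+ 2).
set s := Num.sqrt _ in s2 *; move=> s0.
have e2 : eps ^+ 2 <= 4356%:R / 10000%:R by nra.
have : 0 <= (4356%:R / 10000%:R - eps ^+ 2) * (35644%:R / 10000%:R - eps ^+ 2).
  by apply: mulr_ge0; lra.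
nra.
Qed.

End ChordRatio.

Section Compatible.
Context {R : realType} {d : nat}.
Implicit Types a b c x : 'rV[R]_d.

Lemma XsetC {eps : R} {a b x} : Xset eps a b x -> Xset eps b a x.
Proof. by move=> [xa xb]; split; rewrite (distC b a). Qed.

Lemma cos_angle_sub_lt (hd : (2 <= d)%N) {eps : R} {a b c} :
    0 < eps < 2 -> a != b -> c != b ->
    (forall x, Xset eps a b x -> ~ cball x (dist x b) c) ->
  cos (angle_rad a b c - acos (chord_ratio eps)) <
    chord_ratio eps * (dist c b / dist a b).
Proof.
move=> heps ab cb hX; have k0 := chord_ratio_gt0 heps; have k1 := chord_ratio_le1 eps.
have hk : -1 <= chord_ratio eps <= 1 by apply/andP; split; lra.
have hC := cos_angle_itv a b c.
rewrite /angle_rad cos_sub_acos //.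
have L0 : 0 < dist a b by rewrite dist_gt0.
have s0 : 0 < dist c b by rewrite dist_gt0.
set k := chord_ratio eps in k0 k1 hk *; set L := dist a b in L0 hC *.
set s := dist c b in s0 hC *; set uv := dotp (a - b) (c - b) in hC *.
set r := L / (2 * k).
have Lr : L = 2 * k * r by rewrite /r; field; rewrite gt_eqF.
have r0 : 0 < r by apply: divr_gt0 => //; apply: mulr_gt0.
have far x : dist x a = r -> dist x b = r -> r < dist x c.
  move=> xa xb; rewrite ltNge; apply/negP => xc.
  by apply: (hX x); [split; rewrite -two_chord_ratio | rewrite /cball /= xb].
have hr : L / 2 <= r by rewrite Lr; nra.
have := dotp_lt_of_equidistant_far hd ab hr far; rewrite -/uv -/s.
have -> : r ^+ 2 - L ^+ 2 / 4 = r ^+ 2 * (1 - k ^+ 2) by rewrite Lr; field.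
have -> : s ^+ 2 - uv ^+ 2 / L ^+ 2 = s ^+ 2 * (1 - (uv / (L * s)) ^+ 2).
  by field; rewrite !gt_eqF.
rewrite !sqrtr_sqrM ?ltW //.
set Sk := Num.sqrt (1 - k ^+ 2); set S := Num.sqrt _ => G.
rewrite -subr_gt0.
have -> : k * (s / L) - (k * (uv / (L * s)) + Sk * S) =
    k / (L * s) * (s ^+ 2 - (uv + 2 * (r * Sk) * (s * S))).
  by rewrite Lr; field; rewrite !gt_eqF.
apply: mulr_gt0; last by rewrite subr_gt0.
by apply: divr_gt0 => //; apply: mulr_gt0.
Qed.

End Compatible.

Theorem lemma3p13 (R : realType) (d : nat) (hd : (2 <= d)%N) (eps : R)
  (a b c : 'rV[R]_d)
  (heps0 : 0 < eps) (heps1 : eps <= 66%:R / 100%:R)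
  (hab : a != b) (hbc : b != c) (hac : a != c)
  (hcomp : compatible eps a b c)
  (hratio : (6231%:R / 10000%:R) * (dist c b / dist a b) <= 1) :
  deg (5145%:R / 100%:R) + acos ((6231%:R / 10000%:R) * (dist c b / dist a b))
    < angle_rad a b c
  /\ deg (1029%:R / 10%:R) < angle_rad a b c.
Proof.
have heps : 0 < eps < 2 by apply/andP; split; lra.
have [hk hdeg] : 0 < chord_ratio eps <= 6231%:R / 10000%:R /\
    deg (5145%:R / 100%:R) < acos (chord_ratio eps).
  have k0 := chord_ratio_gt0 heps.
  have hk : chord_ratio eps < 6230862%:R / 10000000%:R.
    by apply: chord_ratio_lt; apply/andP; split.
  by split; [apply/andP; split; lra | apply: deg_5145_lt_acos hk; lra].
have hcb : c != b by rewrite eq_sym.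
have h1 := cos_angle_sub_lt hd heps hab hcb hcomp.1.
have h2 := cos_angle_sub_lt hd heps hcb hab (fun y hy => hcomp.2 y (XsetC hy)).
rewrite -angle_radC -[dist a b / dist c b]invf_div in h2.
have t0 : 0 < dist c b / dist a b by apply: divr_gt0; rewrite dist_gt0.
exact: angle_lower_bounds (angle_rad_itv a b c) hk hdeg t0 hratio h1 h2.
Qed.
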